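(* Let $1\le\tau_1<\dots<\tau_m$ be thresholds, $P,Q$ two candidates, and $Z^*$ a point of the metric space minimizing $SC$. If $P$ beats $Q$ under Weighted Majority Rule 4 and $\delta_I=SC(P)/SC(Q)>\tau_m$, then $SC(P)/SC(Z^* )\le\frac{2\delta_I}{\delta_I-\tau_m}$.
   Context: Voters $N$ and candidates are points of an arbitrary metric space $(X,d)$; $SC(Y)=\sum_{i\in N}d(i,Y)$ for $Y\in X$. Set $\tau_0=1/\tau_1$, $\tau_{m+1}=\infty$, $\delta=\max_{0\le l\le m}\frac{\tau_l\tau_{l+1}+2\tau_{l+1}-1}{\tau_l\tau_{l+1}+1}$ (the $l=m$ term meaning $(\tau_m+2)/\tau_m$), and $k\in\{1,\dots,m\}$ with $\tau_k\le\delta<\tau_{k+1}$; $\frac{\tau_{m+1}-\delta}{\tau_{m+1}-1}:=1$. Preference strength of $i$ for $P$ over $Q$ is $\alpha_i^{PQ}=d(i,Q)/d(i,P)$ when $d(i,P)\le d(i,Q)$. $A_l=\{i: d(i,P)\le d(i,Q),\ \tau_l\le\alpha_i^{PQ}<\tau_{l+1}\}$, $B_l=\{j: d(j,Q)\le d(j,P),\ \tau_l\le\alpha_j^{QP}<\tau_{l+1}\}$, $C$ the remaining voters. Weighted Majority Rule 4: for $l<k$ voters in $A_l\cup B_l$ get weight $\frac{(\delta+1)(\tau_l\tau_{l+1}-1)}{(\tau_l+1)(\tau_{l+1}+1)}$; for $l\ge k$ they get weight $\frac{\tau_{l+1}-\delta}{\tau_{l+1}-1}+\frac{\delta\tau_l-1}{\tau_l+1}$;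 voters in $C$ get weight $0$; $P$ beats $Q$ iff the total weight of $\bigcup_lA_l$ is at least that of $\bigcup_lB_l$. *)

From HB Require Import structures.
From mathcomp Require Import all_boot all_order all_algebra.
Set Implicit Arguments. Unset Strict Implicit. Unset Printing Implicit Defensive.
Import Order.TTheory GRing.Theory Num.Theory.
Local Open Scope ring_scope.

Section WMR4.
Variable R : realFieldType.

Definition is_metric (X : Type) (d : X -> X -> R) : Prop :=
  [/\ forall x y, 0 <= d x y,
      forall x y, d x y = 0 <-> x = y,
      forall x y, d x y = d y x &
      forall x y z, d x z <= d x y + d y z].

Definition SC (X : Type) (N : finType) (d : X -> X -> R) (pos : N -> X) (Y : X) : R :=
  \sum_(i : N) d (pos i) Y.

(* thresholds tau_1 < ... < tau_m (tau indexed by nat, only 1..m used);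
   tau_0 := 1/tau_1 *)
Definition tauE (tau : nat -> R) (l : nat) : R :=
  if l == 0%N then (tau 1%N)^-1 else tau l.

Definition delta_term (tau : nat -> R) (m l : nat) : R :=
  if l == m then (tau m + 2) / tau m
  else (tauE tau l * tau l.+1 + 2 * tau l.+1 - 1) / (tauE tau l * tau l.+1 + 1).

Definition delta (tau : nat -> R) (m : nat) : R :=
  \big[Num.max/delta_term tau m m]_(l < m) delta_term tau m l.

(* weight of voters in A_l \cup B_l under Weighted Majority Rule 4 *)
Definition wmr4_weight (tau : nat -> R) (m k l : nat) : R :=
  let dl := delta tau m in
  if (l < k)%N then
    (dl + 1) * (tauE tau l * tau l.+1 - 1) / ((tauE tau l + 1) * (tau l.+1 + 1))
  else
    (if l == m then 1 else (tau l.+1 - dl) / (tau l.+1 - 1))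
    + (dl * tauE tau l - 1) / (tauE tau l + 1).

(* i is in A_l (for candidates P over Q): d(i,P) <= d(i,Q) and
   tau_l <= alpha_i^{PQ} < tau_{l+1}, with alpha = d(i,Q)/d(i,P)
   (alpha = +infinity when d(i,P) = 0) and tau_{m+1} = +infinity;
   written in cross-multiplied form to handle d(i,P) = 0. *)
Definition in_band (X : Type) (d : X -> X -> R) (x P Q : X)
    (tau : nat -> R) (m l : nat) : bool :=
  [&& d x P <= d x Q,
      tauE tau l * d x P <= d x Q &
      (l < m)%N ==> (d x Q < tau l.+1 * d x P)].

Definition wmr4_score (X : Type) (N : finType) (d : X -> X -> R) (pos : N -> X)
    (P Q : X) (tau : nat -> R) (m k : nat) : R :=
  \sum_(i : N) \sum_(l < m.+1)
     (if in_band d (pos i) P Q tau m l then wmr4_weight tau m k l else 0).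

Definition wmr4_beats (X : Type) (N : finType) (d : X -> X -> R) (pos : N -> X)
    (P Q : X) (tau : nat -> R) (m k : nat) : Prop :=
  wmr4_score d pos Q P tau m k <= wmr4_score d pos P Q tau m k.

End WMR4.

From HB Require Import structures.
From mathcomp Require Import all_boot all_order all_algebra.
From mathcomp Require Import ring lra.
Import Order.TTheory GRing.Theory Num.Theory.
Set Implicit Arguments. Unset Strict Implicit. Unset Printing Implicit Defensive.
Local Open Scope ring_scope.

(* Distortion bound for Weighted Majority Rule 4.
   Write p, q, z for the social costs of P, Q and an arbitrary point Z.
   The proof shows  p - tau_m * q <= 2 z  for EVERY point Z, from which the ratio bound is pure algebra.
   1. Weights: every band weight lies in [0, W_m], and the weight W_m of the
      top band is positive.  Since the bands of a voter are disjoint, the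
      WMR4 score a voter gives P is at most W_m [d(i,P) <= d(i,Q)], and the
      score it gives Q is at least W_m [tau_m d(i,Q) <= d(i,P)].  Hence if P
      beats Q, fewer voters strongly prefer Q than weakly prefer P.
   2. Metric: with E = d(Z,P) - d(Z,Q), each voter satisfies
      d(i,P) - tau_m d(i,Q) - 2 d(i,Z) <= E, and, when E >= 0, also
      <= E * ([strongly prefers Q] - [weakly prefers P]).  Summing and using
      the count from step 1 gives  p - tau_m q <= 2 z. *)

Definition indic (R : realFieldType) (b : bool) : R := if b then 1 else 0.
Arguments indic {R}.

Lemma ler_pdiv_cross (R : realFieldType) (a b c e : R) :
  0 < b -> 0 < e -> a * e <= c * b -> a / b <= c / e.
Proof. by move=> b_gt0 e_gt0 h; rewrite ler_pdivrMr // mulrAC ler_pdivlMr. Qed.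

Lemma low_weight_bounds (R : realFieldType) (D a b t : R) :
  1 <= D -> 0 <= a -> 0 <= b -> 1 <= a * b -> b <= t ->
  0 <= (D + 1) * (a * b - 1) / ((a + 1) * (b + 1)) <= (D + 1) * t / (t + 1).
Proof.
move=> D_ge1 a_ge0 b_ge0 ab_ge1 b_le_t; apply/andP; split.
  by apply: divr_ge0; [apply: mulr_ge0|apply: mulr_ge0]; lra.
apply: ler_pdiv_cross; [apply: mulr_gt0| |]; try lra.
have ab_le : a * b <= a * t by apply: ler_wpM2l.
have num_le : (a * b - 1) * (t + 1) <= t * ((a + 1) * (b + 1)) by nra.
have := ler_wpM2l (_ : 0 <= D + 1) num_le; rewrite !mulrA; lra.
Qed.

(* Bounds for the weight (b-D)/(b-1) + (Da-1)/(a+1) of a band at or above the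
   critical index: again between 0 and (D+1)t/(t+1), because the first
   summand is at most 1 and x |-> (Dx-1)/(x+1) is nondecreasing. *)
Lemma high_weight_bounds (R : realFieldType) (D a b t : R) :
  1 <= D -> D < b -> 1 <= a -> a <= t ->
  0 <= (b - D) / (b - 1) + (D * a - 1) / (a + 1) <= (D + 1) * t / (t + 1).
Proof.
move=> D_ge1 D_lt_b a_ge1 a_le_t; apply/andP; split.
  by apply: addr_ge0; apply: divr_ge0; nra.
have -> : (D + 1) * t / (t + 1) = 1 / 1 + (D * t - 1) / (t + 1) by field; lra.
by apply: lerD; apply: ler_pdiv_cross; nra.
Qed.

Section Thresholds.
Variables (R : realFieldType) (m : nat) (tau : nat -> R).
Hypotheses (tau1_ge1 : 1 <= tau 1%N)
  (tau_incr : forall l, (1 <= l)%N -> (l < m)%N -> tau l < tau l.+1).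

Lemma tau_mono i j : (1 <= i)%N -> (i <= j)%N -> (j <= m)%N -> tau i <= tau j.
Proof.
move=> i_ge1 /subnK <-; elim: (j - i)%N => [|n IHn] n_le; first exact: lexx.
rewrite addSn in n_le *.
have ni_ge1 : (1 <= n + i)%N by rewrite (leq_trans i_ge1) ?leq_addl.
exact: le_trans (IHn (ltnW n_le)) (ltW (tau_incr ni_ge1 n_le)).
Qed.

Lemma tau_ge1 l : (1 <= l)%N -> (l <= m)%N -> 1 <= tau l.
Proof. by move=> l_ge1 l_le; apply: le_trans tau1_ge1 (tau_mono (leqnn 1) l_ge1 l_le). Qed.

Lemma tauE_pos l : (0 < l)%N -> tauE tau l = tau l.
Proof. by case: l. Qed.

Lemma tauE_ge0 l : (l <= m)%N -> 0 <= tauE tau l.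
Proof.
case: l => [|l] l_le; last by have := tau_ge1 (ltn0Sn l) l_le; rewrite tauE_pos //; lra.
by rewrite /tauE /= invr_ge0 (le_trans ler01 tau1_ge1).
Qed.

Lemma tauE_mul_ge1 l : (l < m)%N -> 1 <= tauE tau l * tau l.+1.
Proof.
have t1_gt0 : tau 1%N != 0 by rewrite gt_eqF //; have := tau1_ge1; lra.
case: l => [|l] l_lt; first by rewrite /tauE /= mulVf.
have := tau_ge1 (ltn0Sn l) (ltnW l_lt); have := tau_ge1 (ltn0Sn l.+1) l_lt.
by rewrite tauE_pos //; nra.
Qed.

Lemma in_band_disjoint (X : Type) (d : X -> X -> R) (x P Q : X) (l l' : nat) :
  (l < l')%N -> (l' <= m)%N -> 0 <= d x P ->
  in_band d x P Q tau m l -> in_band d x P Q tau m l' -> False.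
Proof.
move=> l_lt l'_le dP_ge0 /and3P [_ _ upper] /and3P [_ lower _].
have lt_m : (l < m)%N by apply: leq_trans l'_le.
have := implyP upper lt_m; move: lower; rewrite tauE_pos; last exact: leq_ltn_trans l_lt.
have := ler_wpM2r dP_ge0 (tau_mono (ltn0Sn l) l_lt l'_le); lra.
Qed.

Lemma in_top_band (X : Type) (d : X -> X -> R) (x P Q : X) :
  (1 <= m)%N -> 0 <= d x P -> tau m * d x P <= d x Q -> in_band d x P Q tau m m.
Proof.
move=> m_ge1 dP_ge0 strong; have := ler_wpM2r dP_ge0 (tau_ge1 m_ge1 (leqnn m)).
by rewrite /in_band tauE_pos // ltnn strong mul1r => /le_trans ->.
Qed.

End Thresholds.

Section Weights.
Variables (R : realFieldType) (m : nat) (tau : nat -> R) (k : nat).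
Hypotheses (m_ge1 : (1 <= m)%N) (tau1_ge1 : 1 <= tau 1%N)
  (tau_incr : forall l, (1 <= l)%N -> (l < m)%N -> tau l < tau l.+1)
  (k_ge1 : (1 <= k)%N) (k_le_m : (k <= m)%N)
  (tau_k_le : tau k <= delta tau m)
  (tau_k1_gt : (k < m)%N -> delta tau m < tau k.+1).

Let D := delta tau m.
Let W := wmr4_weight tau m k.
Let tau_m_ge1 : 1 <= tau m := tau_ge1 tau1_ge1 tau_incr m_ge1 (leqnn m).

Lemma delta_ge1 : 1 <= D.
Proof. exact: le_trans (tau_ge1 tau1_ge1 tau_incr k_ge1 k_le_m) tau_k_le. Qed.

Lemma top_weight_eq : W m = (D + 1) * tau m / (tau m + 1).
Proof.
rewrite /W /wmr4_weight ltnNge k_le_m /= eqxx tauE_pos // -/D.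
by field; have := tau_m_ge1; lra.
Qed.

Lemma top_weight_gt0 : 0 < W m.
Proof.
have := delta_ge1; have := tau_m_ge1; rewrite top_weight_eq => tm_ge1 D_ge1.
by apply: divr_gt0; [apply: mulr_gt0|]; lra.
Qed.
Lemma weight_bounds l : (l <= m)%N -> 0 <= W l <= W m.
Proof.
move=> l_le; have D_ge1 := delta_ge1.
have [-> | l_ne_m] := eqVneq l m; first by rewrite lexx andbT (ltW top_weight_gt0).
have l_lt_m : (l < m)%N by rewrite ltn_neqAle l_ne_m.
rewrite top_weight_eq /W /wmr4_weight -/D (negbTE l_ne_m).
case: ltnP => [l_lt_k|k_le_l].
  apply: low_weight_bounds D_ge1 (tauE_ge0 tau1_ge1 tau_incr (ltnW l_lt_m)) _
    (tauE_mul_ge1 tau1_ge1 tau_incr l_lt_m)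
    (tau_mono tau_incr (ltn0Sn l) l_lt_m (leqnn m)).
  exact: le_trans ler01 (tau_ge1 tau1_ge1 tau_incr (ltn0Sn l) l_lt_m).
have l_gt0 : (0 < l)%N := leq_trans k_ge1 k_le_l.
rewrite tauE_pos //; apply: high_weight_bounds => //.
- apply: lt_le_trans (tau_k1_gt (leq_ltn_trans k_le_l l_lt_m)) _.
  by apply: (tau_mono tau_incr (ltn0Sn k) _ l_lt_m); rewrite ltnS.
- exact: (tau_ge1 tau1_ge1 tau_incr l_gt0 l_le).
- exact: (tau_mono tau_incr l_gt0 l_le (leqnn m)).
Qed.

Variables (X : Type) (d : X -> X -> R).
Hypothesis d_ge0 : forall x y, 0 <= d x y.

Definition voter_score (x P Q : X) : R :=
  \sum_(l < m.+1) (if in_band d x P Q tau m l then W l else 0).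

Lemma voter_score_le x P Q : voter_score x P Q <= W m * indic (d x P <= d x Q).
Proof.
rewrite /voter_score /indic; case: ifP => [_|weak]; last first.
  by rewrite mulr0 big1 // => l _; rewrite /in_band weak.
rewrite mulr1; case: (pickP (fun l : 'I_m.+1 => in_band d x P Q tau m l)).
  move=> l0 band0; rewrite (bigD1 l0) //= band0 big1 ?addr0.
    by case/andP: (weight_bounds (ltn_ord l0)).
  move=> l l_ne; case: ifP => // band; exfalso.
  case: (ltngtP l l0) => [lt|gt|/val_inj eq]; last by rewrite eq eqxx in l_ne.
  - exact: (in_band_disjoint tau_incr lt (ltn_ord l0) (d_ge0 _ _) band band0).
  - exact: (in_band_disjoint tau_incr gt (ltn_ord l) (d_ge0 _ _) band0 band).
move=> none; rewrite big1 ?(ltW top_weight_gt0) // => l _.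
by rewrite none.
Qed.

Lemma voter_score_ge x P Q :
  W m * indic (tau m * d x Q <= d x P) <= voter_score x Q P.
Proof.
have terms_ge0 (l : 'I_m.+1) : 0 <= if in_band d x Q P tau m l then W l else 0.
  by case: ifP => // _; case/andP: (weight_bounds (ltn_ord l)).
rewrite /indic; case: ifP => [strong|_]; last by rewrite mulr0 sumr_ge0.
rewrite mulr1 /voter_score (bigD1 ord_max) //=.
rewrite (in_top_band tau1_ge1 tau_incr m_ge1 (d_ge0 _ _) strong) lerDl.
exact: sumr_ge0.
Qed.

Lemma majority_count (N : finType) (pos : N -> X) (P Q : X) :
  wmr4_beats d pos P Q tau m k ->
  \sum_i indic (tau m * d (pos i) Q <= d (pos i) P)
    <= \sum_i indic (d (pos i) P <= d (pos i) Q) :> R.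
Proof.
move=> beats; rewrite -(ler_pM2l top_weight_gt0) !mulr_sumr.
apply: le_trans (ler_sum _ (fun i _ => voter_score_ge (pos i) P Q)) _.
apply: le_trans beats _.
exact: ler_sum (fun i _ => voter_score_le (pos i) P Q).
Qed.

End Weights.

Section Pseudometric.
Variables (R : realFieldType) (X : Type) (d : X -> X -> R) (t : R).
Hypotheses (d_ge0 : forall x y, 0 <= d x y) (d_sym : forall x y, d x y = d y x)
  (d_tri : forall x y z, d x z <= d x y + d y z) (t_ge1 : 1 <= t).

Lemma voter_excess_le_gap (Z x P Q : X) :
  d x P - t * d x Q - 2 * d x Z <= d Z P - d Z Q.
Proof.
have := d_tri x Z P; have := d_tri Z x Q; rewrite (d_sym Z x).
have := ler_wpM2r (d_ge0 x Q) t_ge1; have := d_ge0 x Z; lra.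
Qed.

Lemma voter_excess_le_vote (Z x P Q : X) : d Z Q <= d Z P ->
  d x P - t * d x Q - 2 * d x Z
    <= (d Z P - d Z Q) * (indic (t * d x Q <= d x P) - indic (d x P <= d x Q)).
Proof.
move=> gap_ge0; have gap := voter_excess_le_gap Z x P Q.
have dQ_le := ler_wpM2r (d_ge0 x Q) t_ge1; rewrite mul1r in dQ_le.
have := d_tri Z x P; have := d_tri x Z Q; rewrite (d_sym Z x).
have := d_ge0 x Z; rewrite /indic.
case: (lerP (d x P) (d x Q)); case: (lerP (t * d x Q) (d x P)); lra.
Qed.

Lemma social_cost_excess (N : finType) (pos : N -> X) (P Q Z : X) :
  \sum_i indic (t * d (pos i) Q <= d (pos i) P)
    <= \sum_i indic (d (pos i) P <= d (pos i) Q) :> R ->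
  SC d pos P - t * SC d pos Q <= 2 * SC d pos Z.
Proof.
move=> count; rewrite /SC !mulr_sumr -subr_ge0 -!sumrB -oppr_le0 -sumrN.
case: (ltrP (d Z P) (d Z Q)) => [gap_lt0|gap_ge0].
  by apply: sumr_le0 => i _; have := voter_excess_le_gap Z (pos i) P Q; lra.
apply: le_trans (_ : \sum_i (d Z P - d Z Q) * (indic (t * d (pos i) Q <= d (pos i) P)
    - indic (d (pos i) P <= d (pos i) Q)) <= 0).
  by apply: ler_sum => i _; have := voter_excess_le_vote (pos i) gap_ge0; lra.
by rewrite -mulr_sumr sumrB mulr_ge0_le0 // ?subr_ge0 // subr_le0.
Qed.

End Pseudometric.

Lemma ratio_bound (R : realFieldType) (p q z t : R) :
  0 <= t -> 0 <= q -> 0 <= z -> t < p / q -> p - t * q <= 2 * z ->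
  p / z <= 2 * (p / q) / (p / q - t).
Proof.
move=> t_ge0 q_ge0 z_ge0 t_lt excess.
have q_gt0 : 0 < q.
  rewrite lt_neqAle q_ge0 andbT; apply: contraTneq t_lt => <-.
  by rewrite invr0 mulr0 -leNgt.
have tq_lt_p : t * q < p by rewrite -ltr_pdivlMr.
have tq_ge0 : 0 <= t * q by apply: mulr_ge0.
have -> : 2 * (p / q) / (p / q - t) = 2 * p / (p - t * q).
  by field; rewrite !gt_eqF // subr_gt0.
have [-> | z_ne0] := eqVneq z 0.
  by rewrite invr0 mulr0 divr_ge0 //; lra.
have z_gt0 : 0 < z by rewrite lt_neqAle eq_sym z_ne0.
apply: ler_pdiv_cross => //; first lra.
nra.
Qed.

Theorem mainTheorem19 (R : realFieldType) (X : Type) (d : X -> X -> R)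
    (N : finType) (pos : N -> X)
    (m : nat) (tau : nat -> R) (k : nat) (P Q Zs : X) :
  is_metric d ->
  (1 <= m)%N ->
  1 <= tau 1%N ->
  (forall l, (1 <= l)%N -> (l < m)%N -> tau l < tau l.+1) ->
  (1 <= k)%N -> (k <= m)%N ->
  tau k <= delta tau m ->
  ((k < m)%N -> delta tau m < tau k.+1) ->
  (forall Y : X, SC d pos Zs <= SC d pos Y) ->
  wmr4_beats d pos P Q tau m k ->
  tau m < SC d pos P / SC d pos Q ->
  SC d pos P / SC d pos Zs
    <= 2 * (SC d pos P / SC d pos Q) / (SC d pos P / SC d pos Q - tau m).
Proof.
move=> [d_ge0 _ d_sym d_tri] m_ge1 tau1_ge1 tau_incr k_ge1 k_le_m
  tau_k_le tau_k1_gt _ beats ratio_gt.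
have tau_m_ge1 := tau_ge1 tau1_ge1 tau_incr m_ge1 (leqnn m).
have SC_ge0 Y : 0 <= SC d pos Y by apply: sumr_ge0 => i _.
apply: ratio_bound (SC_ge0 Q) (SC_ge0 Zs) ratio_gt _; first lra.
apply: (social_cost_excess d_ge0 d_sym d_tri tau_m_ge1).
exact: (majority_count m_ge1 tau1_ge1 tau_incr k_ge1 k_le_m tau_k_le tau_k1_gt
  d_ge0 beats).
Qed.
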